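(* Let $(H,\alpha_H)$ be an object of $\overline{\mathcal H}^{i,j}(Vec_\Bbbk)$, and let $m_H:H\otimes H\to H$ (written $a\otimes b\mapsto ab$) and $\eta_H:\Bbbk\to H$ (with $\eta_H(1)=1_H$) be morphisms in $\overline{\mathcal H}^{i,j}(Vec_\Bbbk)$. For the functor $\ddot H=-\otimes H$, $(X,\alpha_X)\mapsto(X\otimes H,\alpha_X\otimes\alpha_H)$, define $\ddot H_2(X,Y):(X\otimes H)\otimes(Y\otimes H)\to(X\otimes Y)\otimes H$, $(x\otimes a)\otimes(y\otimes b)\mapsto(x\otimes y)\otimes\alpha_H^i(a)\alpha_H^j(b)$, and $\ddot H_0:\Bbbk\to\Bbbk\otimes H$, $\lambda\mapsto\lambda\otimes 1_H$. Then $(\ddot H,\ddot H_2,\ddot H_0)$ is a monoidal functor on $\overline{\mathcal H}^{i,j}(Vec_\Bbbk)$ if and only if $(H,\alpha_H,m_H,\eta_H)$ is a Hom-algebra.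
   Context: $\Bbbk$ is a field of characteristic $0$; all vector spaces are finite-dimensional; $i,j$ are fixed integers. $\overline{\mathcal H}^{i,j}(Vec_\Bbbk)$ is the monoidal category whose objects are pairs $(X,\alpha_X)$ with $X$ a finite-dimensional $\Bbbk$-space and $\alpha_X$ a linear automorphism; morphisms are linear maps commuting with the $\alpha$'s; $(X,\alpha_X)\otimes(Y,\alpha_Y)=(X\otimes Y,\alpha_X\otimes\alpha_Y)$, unit $(\Bbbk,\mathrm{id})$; associativity $a_{X,Y,Z}((x\otimes y)\otimes z)=\alpha_X^{i+1}(x)\otimes(y\otimes\alpha_Z^{-j-1}(z))$; $l_X(\lambda\otimes x)=\lambda\alpha_X^{j+1}(x)$, $r_X(x\otimes\lambda)=\lambda\alpha_X^{i+1}(x)$. A Hom-algebra $(A,\mu,1_A,\alpha)$ satisfies $\alpha(a)(bc)=(ab)\alpha(c)$, $\alpha(1_A)=1_A$, $1_Aa=a1_A=\alpha(a)$. A monoidal functor $(G,G_2,G_0)$ has natural $G_2(X,Y):GX\otimes GY\to G(X\otimes Y)$ and $G_0:I\to GI$ with $G_2(X,Y\otimes Z)\circ(\mathrm{id}\otimes G_2(Y,Z))\circ a_{GX,GY,GZ}=G(a_{X,Y,Z})\circ G_2(X\otimes Y,Z)\circ(G_2(X,Y)\otimes\mathrm{id})$ and $G(r_X)\circ G_2(X,I)\circ(\mathrm{id}\otimes G_0)\circ r_{GX}^{-1}=\mathrm{id}=G(l_X)\circ G_2(I,X)\circ(G_0\otimes\mathrm{id})\circ l_{GX}^{-1}$.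 *)

(* Concrete model of the monoidal category
   \overline{H}^{i,j}(Vec_k):
   - an object is a pair (n, A) : a finite-dimensional space k^n (row vectors)
     together with an invertible matrix A (the automorphism alpha, acting as
     v |-> v *m A);
   - a morphism (n,A) -> (m,B) is a matrix F : 'M_(n,m) (acting as v |-> v *m F)
     with A *m F = F *m B  (i.e. alpha_Y o f = f o alpha_X);
   - composition  g o f  is  F *m G;
   - tensor product of spaces k^n (x) k^m = k^(n*m) via the Kronecker product
     (mathcomp real_closed's  tensmx, index (a,b) |-> a*m+b); tensor of maps
     is  F *t G, so (u (x) v) *m (F *t G) = (u *m F) (x) (v *m G). *)
From HB Require Import structures.
From mathcomp Require Import all_boot all_order all_algebra.
From mathcomp Require Import mxtens.
Set Implicit Arguments.
Unset Strict Implicit.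
Unset Printing Implicit Defensive.
Import Order.TTheory GRing.Theory Num.Theory.
Local Open Scope ring_scope.

Section HomTensor.
Variable K : fieldType.

Definition powz n (A : 'M[K]_n) (z : int) : 'M[K]_n :=
  match z with
  | Posz k => A ^+ k
  | Negz k => invmx A ^+ k.+1
  end.

Record Obj := MkObj { dim : nat; alpha : 'M[K]_dim }.

Definition is_obj (X : Obj) : Prop := alpha X \in unitmx.

Definition is_mor (X Y : Obj) (F : 'M[K]_(dim X, dim Y)) : Prop :=
  alpha X *m F = F *m alpha Y.

Definition tens (X Y : Obj) : Obj := MkObj (alpha X *t alpha Y).
Definition unitO : Obj := @MkObj 1 1%:M.

Definition ifst m n (k : 'I_(m * n)) : 'I_m := (mxtens_unindex k).1.
Definition isnd m n (k : 'I_(m * n)) : 'I_n := (mxtens_unindex k).2.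

(* reindexing  (x (x) y) (x) z |-> x (x) (y (x) z) *)
Definition assoc_mx n m p : 'M[K]_((n * m) * p, n * (m * p)) :=
  \matrix_(r, s) ((ifst (ifst r) == ifst s) && (isnd (ifst r) == ifst (isnd s))
                  && (isnd r == isnd (isnd s)))%:R.
(* lambda (x) x |-> lambda x   and   x (x) lambda |-> lambda x *)
Definition lunit_mx n : 'M[K]_(1 * n, n) := \matrix_(r, s) (isnd r == s)%:R.
Definition runit_mx n : 'M[K]_(n * 1, n) := \matrix_(r, s) (ifst r == s)%:R.

Variables i j : int.

(* a_{X,Y,Z}((x (x) y) (x) z) = alpha_X^{i+1}(x) (x) (y (x) alpha_Z^{-j-1}(z)) *)
Definition assocM (X Y Z : Obj) : 'M[K]_((dim X * dim Y) * dim Z, dim X * (dim Y * dim Z)) :=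
  ((powz (alpha X) (i + 1) *t 1%:M) *t powz (alpha Z) (- j - 1)) *m assoc_mx _ _ _.
(* l_X(lambda (x) x) = lambda alpha_X^{j+1}(x) *)
Definition lunitM (X : Obj) : 'M[K]_(1 * dim X, dim X) :=
  lunit_mx (dim X) *m powz (alpha X) (j + 1).
(* r_X(x (x) lambda) = lambda alpha_X^{i+1}(x) *)
Definition runitM (X : Obj) : 'M[K]_(dim X * 1, dim X) :=
  runit_mx (dim X) *m powz (alpha X) (i + 1).

(* The data (H, alpha_H, m_H, eta_H): dim h, alpha_H : 'M_h,
   m_H : 'M_(h*h, h) (a (x) b |-> ab), eta_H : 'M_(1,h) (its row is 1_H). *)
Variables (h : nat) (aH : 'M[K]_h) (mH : 'M[K]_(h * h, h)) (eta : 'M[K]_(1, h)).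
Definition HO : Obj := MkObj aH.

Definition hmul (a b : 'rV[K]_h) : 'rV[K]_h := \row_k ((a *t b) *m mH) 0 k.
Definition hone : 'rV[K]_h := eta.
Definition halpha (a : 'rV[K]_h) : 'rV[K]_h := a *m aH.

Definition is_hom_algebra : Prop :=
  [/\ forall a b c, hmul (halpha a) (hmul b c) = hmul (hmul a b) (halpha c),
      halpha hone = hone &
      forall a, hmul hone a = halpha a /\ hmul a hone = halpha a].

Definition Gobj (X : Obj) : Obj := tens X HO.
Definition Gmor (X Y : Obj) (F : 'M[K]_(dim X, dim Y)) :
  'M[K]_(dim (Gobj X), dim (Gobj Y)) := F *t (1%:M : 'M[K]_h).

(* G_2(X,Y) : (x (x) a) (x) (y (x) b) |-> (x (x) y) (x) alpha^i(a) alpha^j(b) *)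
Definition G2 (X Y : Obj) :
  'M[K]_(dim (tens (Gobj X) (Gobj Y)), dim (Gobj (tens X Y))) :=
  \matrix_(r, s)
    (((ifst (ifst r) == ifst (ifst s)) && (ifst (isnd r) == isnd (ifst s)))%:R
     * ((powz aH i *t powz aH j) *m mH)
         (mxtens_index (isnd (ifst r), isnd (isnd r))) (isnd s)).

(* G_0 : lambda |-> lambda (x) 1_H *)
Definition G0 : 'M[K]_(dim unitO, dim (Gobj unitO)) :=
  \matrix_(r, s) eta 0 (isnd s).

(* (G, G_2, G_0) is a monoidal functor on the category:
   G_2 is a natural family of morphisms, G_0 is a morphism, and the
   associativity and the two unit coherence conditions hold.
   r^{-1}, l^{-1} (inverses of the invertible unit constraints) are taken
   with pinvmx, which is the two-sided inverse of an invertible map. *)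
Definition is_monoidal_functor : Prop :=
  [/\ (forall X X' Y Y' (F : 'M[K]_(dim X, dim X')) (F' : 'M[K]_(dim Y, dim Y')),
         is_obj X -> is_obj X' -> is_obj Y -> is_obj Y' ->
         is_mor F -> is_mor F' ->
         G2 X Y *m @Gmor (tens X Y) (tens X' Y') (F *t F') = (Gmor F *t Gmor F') *m G2 X' Y'),
      (forall X Y, is_obj X -> is_obj Y ->
         @is_mor (tens (Gobj X) (Gobj Y)) (Gobj (tens X Y)) (G2 X Y)),
      @is_mor unitO (Gobj unitO) G0,
      (forall X Y Z, is_obj X -> is_obj Y -> is_obj Z ->
         assocM (Gobj X) (Gobj Y) (Gobj Z) *m (1%:M *t G2 Y Z) *m G2 X (tens Y Z)
         = (G2 X Y *t 1%:M) *m G2 (tens X Y) Z *m @Gmor (tens (tens X Y) Z) (tens X (tens Y Z)) (assocM X Y Z)) &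
      (forall X, is_obj X ->
         pinvmx (runitM (Gobj X)) *m (1%:M *t G0) *m G2 X unitO *m @Gmor (tens X unitO) X (runitM X)
           = 1%:M
         /\ pinvmx (lunitM (Gobj X)) *m (G0 *t 1%:M) *m G2 unitO X *m @Gmor (tens unitO X) X (lunitM X)
           = 1%:M)].

End HomTensor.

(* Everything is tested on pure tensors, on which G_2 acts by
   (x (x) a) (x) (y (x) b) |-> (x (x) y) (x) alpha^i(a) alpha^j(b).  Because
   m_H and eta_H are morphisms, alpha is multiplicative and fixes 1_H, which
   makes G_2 natural and G_2, G_0 morphisms for any such data.  On
   ((x (x) a) (x) (y (x) b)) (x) (z (x) c) the two sides of the associativity
   constraint become, after a common first tensor factor, alpha(a')(b'c') and
   (a'b')alpha(c') with a' = alpha^(2i)(a), b' = alpha^(i+j)(b),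
   c' = alpha^(j-1)(c); the unit constraints similarly become a'1 = alpha(a')
   and 1a' = alpha(a').  Since alpha is invertible, a', b', c' range over all
   of H, so the constraints hold exactly when H is a Hom-algebra. *)

From Pilot Require Import Defs.
From HB Require Import structures.
From mathcomp Require Import all_boot all_order all_algebra.
From mathcomp Require Import mxtens.
Set Implicit Arguments.
Unset Strict Implicit.
Unset Printing Implicit Defensive.
Import GRing.Theory.
Local Open Scope ring_scope.

Section IntegerPowers.
Variable K : fieldType.

Lemma powzE n (A : 'M[K]_n.+1) z : powz A z = A ^ z.
Proof. by case: z => k //=; rewrite exprVn. Qed.

Lemma powz1mx n z : powz (1%:M : 'M[K]_n) z = 1%:M.
Proof. by case: z => k /=; rewrite ?invmx1 expr1n. Qed.

Lemma powz1 n (A : 'M[K]_n) : powz A 1 = A.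
Proof. by rewrite /= expr1. Qed.

Lemma powzD n (A : 'M[K]_n) y z :
  A \in unitmx -> powz A (y + z) = powz A y *m powz A z.
Proof.
case: n A => [A _ | n A uA]; first by apply/matrixP => [[]].
by rewrite !powzE exprzDr.
Qed.

Lemma mulmx_powzK n m (A : 'M[K]_n) (v : 'M[K]_(m, n)) y z :
  A \in unitmx -> v *m powz A y *m powz A z = v *m powz A (y + z).
Proof. by move=> uA; rewrite -mulmxA powzD. Qed.

Lemma mulmx_powzNK n m (A : 'M[K]_n) (v : 'M[K]_(m, n)) z :
  A \in unitmx -> v *m powz A (- z) *m powz A z = v.
Proof. by move=> uA; rewrite mulmx_powzK // addNr mulmx1. Qed.

Lemma mulmx_powzS n m (A : 'M[K]_n) (v : 'M[K]_(m, n)) z :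
  A \in unitmx -> v *m powz A z *m A = v *m powz A (z + 1).
Proof. by move=> uA; rewrite -mulmx_powzK // powz1. Qed.

Lemma mulmx_powzC n m (A : 'M[K]_n) (v : 'M[K]_(m, n)) z :
  A \in unitmx -> v *m A *m powz A z = v *m powz A z *m A.
Proof.
move=> uA; have := powzD 1 z uA; have := powzD z 1 uA.
by rewrite powz1 addrC -!mulmxA => <- <-.
Qed.

Lemma powz_unitmx n (A : 'M[K]_n) z : A \in unitmx -> powz A z \in unitmx.
Proof.
move=> uA; have := powzD z (- z) uA; rewrite subrr => /esym.
by case/mulmx1_unit.
Qed.

Lemma exp_intertwine p n (B : 'M[K]_p) (A : 'M[K]_n) (F : 'M[K]_(p, n)) k :
  B *m F = F *m A -> B ^+ k *m F = F *m A ^+ k.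
Proof.
move=> BFA; elim: k => [|k IHk]; first by rewrite !expr0 mul1mx mulmx1.
by rewrite !exprSr -!mulmxE -mulmxA BFA mulmxA IHk -mulmxA.
Qed.

Lemma powz_intertwine p n (B : 'M[K]_p) (A : 'M[K]_n) (F : 'M[K]_(p, n)) z :
  B \in unitmx -> A \in unitmx -> B *m F = F *m A ->
  powz B z *m F = F *m powz A z.
Proof.
move=> uB uA BFA; case: z => k /=; apply: exp_intertwine => //.
by apply: (canLR (mulKmx uB)); rewrite mulmxA BFA -mulmxA mulmxV // mulmx1.
Qed.

Lemma tensmx11 m n : (1%:M : 'M[K]_m) *t (1%:M : 'M[K]_n) = 1%:M.
Proof.
apply/matrixP => r s; case: (mxtens_indexP r) => a b; case: (mxtens_indexP s) => c d.
by rewrite tensmxE !mxE (can_eq (@mxtens_indexK _ _)) xpair_eqE -natrM mulnb.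
Qed.

Lemma tensmx_unitmx m n (A : 'M[K]_m) (B : 'M[K]_n) :
  A \in unitmx -> B \in unitmx -> A *t B \in unitmx.
Proof.
move=> uA uB; suff: (A *t B) *m (invmx A *t invmx B) = 1%:M by case/mulmx1_unit.
by rewrite tensmx_mul !mulmxV // tensmx11.
Qed.

Lemma invmx_tens m n (A : 'M[K]_m) (B : 'M[K]_n) :
  A \in unitmx -> B \in unitmx -> invmx (A *t B) = invmx A *t invmx B.
Proof.
move=> uA uB; have E : (A *t B) *m (invmx A *t invmx B) = 1%:M.
  by rewrite tensmx_mul !mulmxV // tensmx11.
by rewrite -[RHS](mulKmx (tensmx_unitmx uA uB)) E mulmx1.
Qed.

Lemma powz_tens m n (A : 'M[K]_m) (B : 'M[K]_n) z :
  A \in unitmx -> B \in unitmx -> powz (A *t B) z = powz A z *t powz B z.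
Proof.
have exp_tens (C : 'M[K]_m) (D : 'M[K]_n) k : (C *t D) ^+ k = C ^+ k *t D ^+ k.
  elim: k => [|k IHk]; first by rewrite !expr0 tensmx11.
  by rewrite !exprS IHk -!mulmxE tensmx_mul.
by move=> uA uB; case: z => k /=; rewrite ?invmx_tens // exp_tens.
Qed.

End IntegerPowers.

Section TensorRows.
Variable K : fieldType.

Lemma ifst_index m n (a : 'I_m) (b : 'I_n) : ifst (mxtens_index (a, b)) = a.
Proof. by rewrite /ifst mxtens_indexK. Qed.

Lemma isnd_index m n (a : 'I_m) (b : 'I_n) : isnd (mxtens_index (a, b)) = b.
Proof. by rewrite /isnd mxtens_indexK. Qed.

Lemma tens_rowE m n (u : 'rV[K]_m) (v : 'rV[K]_n) k :
  (u *t v) 0 k = u 0 (ifst k) * v 0 (isnd k).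
Proof. by rewrite mxE !ord1. Qed.

Lemma tens_rV_mul m n p q (u : 'rV[K]_m) (v : 'rV[K]_n) (A : 'M_(m, p)) (B : 'M_(n, q)) :
  (u *t v) *m (A *t B) = (u *m A) *t (v *m B).
Proof. exact: tensmx_mul. Qed.

Lemma sum_mxtens_index m n (F : 'I_(m * n) -> K) :
  \sum_k F k = \sum_(a < m) \sum_(b < n) F (mxtens_index (a, b)).
Proof.
rewrite pair_big; apply: reindex.
by exists (@mxtens_unindex m n) => k _; rewrite (mxtens_indexK, mxtens_unindexK) //; case: k.
Qed.

Lemma mulmx_tens_rowE m n p (u : 'rV[K]_m) (v : 'rV[K]_n) (M : 'M[K]_(m * n, p)) s :
  ((u *t v) *m M) 0 s = \sum_a \sum_b u 0 a * v 0 b * M (mxtens_index (a, b)) s.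
Proof.
rewrite mxE sum_mxtens_index; apply: eq_bigr => a _; apply: eq_bigr => b _.
by rewrite tens_rowE ifst_index isnd_index.
Qed.

Lemma sum_support1 n (a : 'I_n) (F : 'I_n -> K) :
  (forall x, x != a -> F x = 0) -> \sum_x F x = F a.
Proof. by move=> Fa; rewrite (bigD1 a) //= big1 ?addr0 // => x /Fa. Qed.

Lemma delta_mx_tens m n (a : 'I_m) (b : 'I_n) :
  (delta_mx 0 a : 'rV[K]_m) *t (delta_mx 0 b : 'rV[K]_n) = delta_mx 0 (mxtens_index (a, b)).
Proof.
apply/rowP => s; case: (mxtens_indexP s) => c d.
by rewrite tens_rowE ifst_index isnd_index !mxE (can_eq (@mxtens_indexK _ _)) xpair_eqE -natrM mulnb.
Qed.

Lemma one_rV1_neq0 : (1%:M : 'rV[K]_1) != 0.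
Proof. by apply/rV0Pn; exists 0; rewrite mxE oner_neq0. Qed.

Lemma tens_rV_neq0 m n (u : 'rV[K]_m) (v : 'rV[K]_n) : u != 0 -> v != 0 -> u *t v != 0.
Proof.
case/rV0Pn => k uk /rV0Pn [l vl]; apply/rV0Pn; exists (mxtens_index (k, l)).
by rewrite tens_rowE ifst_index isnd_index mulf_neq0.
Qed.

Lemma tens_rV_inj m n (w : 'rV[K]_m) (x y : 'rV[K]_n) :
  w != 0 -> w *t x = w *t y -> x = y.
Proof.
case/rV0Pn => k wk /matrixP wxy; apply/rowP => l; have := wxy 0 (mxtens_index (k, l)).
by rewrite !tens_rowE ifst_index isnd_index => /mulfI; apply.
Qed.

Lemma delta_mx_ext m p (A B : 'M[K]_(m, p)) :
  (forall k, (delta_mx 0 k : 'rV_m) *m A = delta_mx 0 k *m B) -> A = B.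
Proof. by move=> AB; apply/row_matrixP => k; rewrite !rowE AB. Qed.

Lemma tens22_ext m1 m2 m3 m4 p (A B : 'M[K]_((m1 * m2) * (m3 * m4), p)) :
  (forall (u1 : 'rV_m1) (u2 : 'rV_m2) (u3 : 'rV_m3) (u4 : 'rV_m4),
     ((u1 *t u2) *t (u3 *t u4)) *m A = ((u1 *t u2) *t (u3 *t u4)) *m B) ->
  A = B.
Proof.
move=> AB; apply: delta_mx_ext => k.
case: (mxtens_indexP k) => k1 k2; case: (mxtens_indexP k1) => x1 x2.
by case: (mxtens_indexP k2) => x3 x4; rewrite -!delta_mx_tens AB.
Qed.

Lemma tens222_ext m1 m2 m3 m4 m5 m6 p
    (A B : 'M[K]_(((m1 * m2) * (m3 * m4)) * (m5 * m6), p)) :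
  (forall (u1 : 'rV_m1) (u2 : 'rV_m2) (u3 : 'rV_m3) (u4 : 'rV_m4) (u5 : 'rV_m5) (u6 : 'rV_m6),
     (((u1 *t u2) *t (u3 *t u4)) *t (u5 *t u6)) *m A
     = (((u1 *t u2) *t (u3 *t u4)) *t (u5 *t u6)) *m B) ->
  A = B.
Proof.
move=> AB; apply: delta_mx_ext => k.
case: (mxtens_indexP k) => k1 k2; case: (mxtens_indexP k1) => k3 k4.
case: (mxtens_indexP k3) => x1 x2; case: (mxtens_indexP k4) => x3 x4.
by case: (mxtens_indexP k2) => x5 x6; rewrite -!delta_mx_tens AB.
Qed.

Lemma delta_mx11 : (delta_mx 0 0 : 'rV[K]_1) = 1%:M.
Proof. by apply/rowP => k; rewrite [k]ord1 !mxE. Qed.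

Lemma tens2r_ext m1 m2 p (A B : 'M[K]_((m1 * m2) * 1, p)) :
  (forall (u1 : 'rV_m1) (u2 : 'rV_m2),
     ((u1 *t u2) *t 1%:M) *m A = ((u1 *t u2) *t 1%:M) *m B) ->
  A = B.
Proof.
move=> AB; apply: delta_mx_ext => k.
case: (mxtens_indexP k) => k1 o; case: (mxtens_indexP k1) => x1 x2.
by rewrite -!delta_mx_tens [o]ord1 delta_mx11 AB.
Qed.

Lemma tens2l_ext m1 m2 p (A B : 'M[K]_(1 * (m1 * m2), p)) :
  (forall (u1 : 'rV_m1) (u2 : 'rV_m2),
     (1%:M *t (u1 *t u2)) *m A = (1%:M *t (u1 *t u2)) *m B) ->
  A = B.
Proof.
move=> AB; apply: delta_mx_ext => k.
case: (mxtens_indexP k) => o k1; case: (mxtens_indexP k1) => x1 x2.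
by rewrite -!delta_mx_tens [o]ord1 delta_mx11 AB.
Qed.

End TensorRows.
Arguments sum_support1 {K n} a {F}.

Section CoherenceMatrices.
Variable K : fieldType.

Lemma assoc_mx_tens m n p (u : 'rV[K]_m) (v : 'rV[K]_n) (w : 'rV[K]_p) :
  ((u *t v) *t w) *m assoc_mx K m n p = u *t (v *t w).
Proof.
have assoc_mxE x y z a b c : assoc_mx K m n p
    (mxtens_index (mxtens_index (x, y), z)) (mxtens_index (a, mxtens_index (b, c)))
    = ((x == a) && (y == b) && (z == c))%:R.
  by rewrite mxE !(ifst_index, isnd_index).
apply/rowP => s; case: (mxtens_indexP s) => a t; case: (mxtens_indexP t) => b c.
rewrite mulmx_tens_rowE sum_mxtens_index.
rewrite (sum_support1 a) => [|x /negPf xa]; last first.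
  by rewrite !big1 // => y _; rewrite big1 // => z _; rewrite assoc_mxE xa mulr0.
rewrite (sum_support1 b) => [|y /negPf yb]; last first.
  by rewrite big1 // => z _; rewrite assoc_mxE yb andbF mulr0.
rewrite (sum_support1 c) => [|z /negPf zc]; last by rewrite assoc_mxE zc andbF mulr0.
by rewrite assoc_mxE !eqxx mulr1 !tens_rowE !(ifst_index, isnd_index) mulrA.
Qed.

Lemma lunit_mx_tens n (c : 'rV[K]_1) (u : 'rV[K]_n) :
  (c *t u) *m lunit_mx K n = c 0 0 *: u.
Proof.
apply/rowP => s; rewrite mulmx_tens_rowE big_ord1.
rewrite (sum_support1 s) => [|y /negPf ys]; last by rewrite mxE isnd_index ys mulr0.
by rewrite mxE isnd_index eqxx mulr1 mxE.
Qed.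

Lemma runit_mx_tens n (c : 'rV[K]_1) (u : 'rV[K]_n) :
  (u *t c) *m runit_mx K n = c 0 0 *: u.
Proof.
apply/rowP => s; rewrite mulmx_tens_rowE.
rewrite (sum_support1 s) => [|y /negPf ys]; last by rewrite big_ord1 mxE ifst_index ys mulr0.
by rewrite big_ord1 mxE ifst_index eqxx mulr1 mxE mulrC.
Qed.

Lemma row_full_surj m n (R : 'M[K]_(m, n)) :
  (forall v : 'rV_n, exists w, w *m R = v) -> row_full R.
Proof.
move=> surjR; rewrite -sub1mx; apply/row_subP => k.
by have [w <-] := surjR (row k 1%:M); apply/submxP; exists w.
Qed.

Lemma runitM_full i (X : Obj K) : is_obj X -> row_full (runitM i X).
Proof.
move=> uX; apply: row_full_surj => v.
exists ((v *m invmx (powz (alpha X) (i + 1))) *t (1%:M : 'M_1)).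
by rewrite mulmxA runit_mx_tens mxE scale1r mulmxKV ?powz_unitmx.
Qed.

Lemma lunitM_full j (X : Obj K) : is_obj X -> row_full (lunitM j X).
Proof.
move=> uX; apply: row_full_surj => v.
exists ((1%:M : 'M_1) *t (v *m invmx (powz (alpha X) (j + 1)))).
by rewrite mulmxA lunit_mx_tens mxE scale1r mulmxKV ?powz_unitmx.
Qed.

Lemma pinvmx_mul_eq1 m n (R S : 'M[K]_(m, n)) : m = n -> row_full R ->
  pinvmx R *m S = 1%:M <-> S = R.
Proof.
move=> mn fullR; split => [RS|->]; last exact: mulVpmx.
have freeR : row_free R by rewrite /row_free (eqP fullR) mn.
by rewrite -[S]mul1mx -(mulmxVp freeR) -mulmxA RS mulmx1.
Qed.

End CoherenceMatrices.

Section TensorHFunctor.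
Variables (K : fieldType) (i j : int) (h : nat).
Variables (aH : 'M[K]_h) (mH : 'M[K]_(h * h, h)) (eta : 'M[K]_(1, h)).
Hypothesis uaH : is_obj (HO aH).
Hypothesis mHm : @is_mor K (tens (HO aH) (HO aH)) (HO aH) mH.
Hypothesis etam : @is_mor K (unitO K) (HO aH) eta.

Local Notation P := (powz aH).
Local Notation mul := (hmul mH).
Local Notation G2 := (G2 i j aH mH).

Lemma hmulE a b : mul a b = (a *t b) *m mH.
Proof. by apply/rowP => k; rewrite mxE. Qed.

Lemma hmul_powz z a b : mul a b *m P z = mul (a *m P z) (b *m P z).
Proof.
have := powz_intertwine z (tensmx_unitmx uaH uaH) uaH mHm.
rewrite /= powz_tens // => mH_powz.
by rewrite !hmulE -mulmxA -mH_powz mulmxA tens_rV_mul.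
Qed.

Lemma hone_powz z : eta *m P z = eta.
Proof.
have := powz_intertwine z (unitmx1 _ _) uaH etam.
by rewrite powz1mx mul1mx.
Qed.

Lemma G2_tens (X Y : Obj K) (u : 'rV_(Defs.dim X)) (v : 'rV_(Defs.dim Y)) (a b : 'rV_h) :
  ((u *t a) *t (v *t b)) *m G2 X Y = (u *t v) *t mul (a *m P i) (b *m P j).
Proof.
have G2E x a' y b' x0 y0 c : G2 X Y
    (mxtens_index (mxtens_index (x, a'), mxtens_index (y, b')))
    (mxtens_index (mxtens_index (x0, y0), c))
    = ((x == x0) && (y == y0))%:R * ((P i *t P j) *m mH) (mxtens_index (a', b')) c.
  by rewrite mxE !(ifst_index, isnd_index).
apply/rowP => s; case: (mxtens_indexP s) => t c; case: (mxtens_indexP t) => x0 y0.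
rewrite hmulE -tens_rV_mul -mulmxA tens_rowE ifst_index isnd_index mulmx_tens_rowE.
rewrite sum_mxtens_index (sum_support1 x0) => [|x /negPf xx0]; last first.
  rewrite big1 // => a' _; rewrite big1 // => k _.
  by case: (mxtens_indexP k) => y b'; rewrite G2E xx0 mul0r mulr0.
rewrite tens_rowE !(ifst_index, isnd_index) mulmx_tens_rowE mulr_sumr.
apply: eq_bigr => a' _; rewrite sum_mxtens_index.
rewrite (sum_support1 y0) => [|y /negPf yy0]; last first.
  by rewrite big1 // => b' _; rewrite G2E yy0 andbF mul0r mulr0.
rewrite mulr_sumr; apply: eq_bigr => b' _.
rewrite G2E !eqxx mul1r !tens_rowE !(ifst_index, isnd_index).
by rewrite mulrACA !mulrA.
Qed.

Lemma G0E : G0 aH eta = (1%:M : 'M_1) *t eta.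
Proof. by apply/rowP => s; rewrite tens_rowE !mxE [ifst s]ord1 mul1r. Qed.

Lemma G2_natural (X X' Y Y' : Obj K)
    (F : 'M_(Defs.dim X, Defs.dim X')) (F' : 'M_(Defs.dim Y, Defs.dim Y')) :
  G2 X Y *m @Gmor K h aH (tens X Y) (tens X' Y') (F *t F')
  = (Gmor aH F *t Gmor aH F') *m G2 X' Y'.
Proof.
apply: tens22_ext => u a v b.
by rewrite !mulmxA G2_tens !tens_rV_mul !mulmx1 G2_tens.
Qed.

Lemma G2_is_mor (X Y : Obj K) :
  @is_mor K (tens (Gobj aH X) (Gobj aH Y)) (Gobj aH (tens X Y)) (G2 X Y).
Proof.
apply: tens22_ext => u a v b.
rewrite !mulmxA /= !tens_rV_mul !G2_tens tens_rV_mul.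
by rewrite -[aH in RHS]powz1 hmul_powz powz1 !mulmx_powzC // tens_rV_mul.
Qed.

Lemma G0_is_mor : @is_mor K (unitO K) (Gobj aH (unitO K)) (G0 aH eta).
Proof. by rewrite /is_mor /= G0E mul1mx tens_rV_mul mulmx1 -etam mul1mx. Qed.

Lemma G_assoc_lhs_tens (X Y Z : Obj K) : is_obj X -> is_obj Z ->
  forall (u : 'rV_(Defs.dim X)) (v : 'rV_(Defs.dim Y)) (w : 'rV_(Defs.dim Z)) (a b c : 'rV_h),
  (((u *t a) *t (v *t b)) *t (w *t c)) *m
    (assocM i j (Gobj aH X) (Gobj aH Y) (Gobj aH Z) *m (1%:M *t G2 Y Z) *m G2 X (tens Y Z))
  = ((u *m powz (alpha X) (i + 1)) *t (v *t (w *m powz (alpha Z) (- j - 1)))) *t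
    mul (halpha aH (a *m P (i + i))) (mul (b *m P (i + j)) (c *m P (j - 1))).
Proof.
move=> uX uZ u v w a b c.
rewrite /assocM !mulmxA /= !powz_tens // !tens_rV_mul mulmx1 assoc_mx_tens.
rewrite tens_rV_mul mulmx1 (G2_tens v (w *m _)).
rewrite (@G2_tens X (tens Y Z)) hmul_powz /halpha !mulmx_powzK // mulmx_powzS //.
by rewrite addrAC addrACA addNr add0r [-1 + j]addrC.
Qed.

Lemma G_assoc_rhs_tens (X Y Z : Obj K) : is_obj X -> is_obj Z ->
  forall (u : 'rV_(Defs.dim X)) (v : 'rV_(Defs.dim Y)) (w : 'rV_(Defs.dim Z)) (a b c : 'rV_h),
  (((u *t a) *t (v *t b)) *t (w *t c)) *m
    ((G2 X Y *t 1%:M) *m G2 (tens X Y) Z *m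
       @Gmor K h aH (tens (tens X Y) Z) (tens X (tens Y Z)) (assocM i j X Y Z))
  = ((u *m powz (alpha X) (i + 1)) *t (v *t (w *m powz (alpha Z) (- j - 1)))) *t
    mul (mul (a *m P (i + i)) (b *m P (i + j))) (halpha aH (c *m P (j - 1))).
Proof.
move=> uX uZ u v w a b c.
rewrite !mulmxA tens_rV_mul G2_tens mulmx1 (@G2_tens (tens X Y) Z) /Gmor /assocM.
rewrite tens_rV_mul mulmx1 mulmxA !tens_rV_mul mulmx1 assoc_mx_tens.
rewrite hmul_powz /halpha !mulmx_powzK // mulmx_powzS //.
by rewrite subrK [j + i]addrC.
Qed.

Lemma unitO_obj : is_obj (unitO K).
Proof. exact: unitmx1. Qed.

Lemma Gobj_obj (X : Obj K) : is_obj X -> is_obj (Gobj aH X).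
Proof. by move=> uX; apply: tensmx_unitmx. Qed.

Lemma hom_assoc_iff :
  (forall X Y Z : Obj K, is_obj X -> is_obj Y -> is_obj Z ->
     assocM i j (Gobj aH X) (Gobj aH Y) (Gobj aH Z) *m (1%:M *t G2 Y Z) *m G2 X (tens Y Z)
     = (G2 X Y *t 1%:M) *m G2 (tens X Y) Z *m
         @Gmor K h aH (tens (tens X Y) Z) (tens X (tens Y Z)) (assocM i j X Y Z))
  <-> (forall a b c, mul (halpha aH a) (mul b c) = mul (mul a b) (halpha aH c)).
Proof.
split=> [coh a b c | assoc X Y Z uX _ uZ]; last first.
  by apply: tens222_ext => u a v b w c; rewrite G_assoc_lhs_tens // G_assoc_rhs_tens // assoc.
have := congr1 (mulmx ((((1%:M : 'rV_1) *t (a *m P (- (i + i))))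
                        *t ((1%:M : 'rV_1) *t (b *m P (- (i + j)))))
                        *t ((1%:M : 'rV_1) *t (c *m P (- (j - 1))))))
  (coh _ _ _ unitO_obj unitO_obj unitO_obj).
rewrite (G_assoc_lhs_tens (Y := unitO K) unitO_obj unitO_obj).
rewrite (G_assoc_rhs_tens (Y := unitO K) unitO_obj unitO_obj).
rewrite !mulmx_powzNK // => /tens_rV_inj; apply.
by rewrite /= !powz1mx !mulmx1 !tens_rV_neq0 ?one_rV1_neq0.
Qed.

Lemma G_runit_tens (X : Obj K) (u : 'rV_(Defs.dim X)) (a : 'rV_h) :
  ((u *t a) *t (1%:M : 'rV_1)) *m
    ((1%:M *t G0 aH eta) *m G2 X (unitO K) *m @Gmor K h aH (tens X (unitO K)) X (runitM i X))
  = (u *m powz (alpha X) (i + 1)) *t mul (a *m P i) eta.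
Proof.
rewrite !mulmxA tens_rV_mul mulmx1 G0E mul1mx (@G2_tens X (unitO K)) hone_powz.
by rewrite /Gmor /runitM tens_rV_mul mulmx1 mulmxA runit_mx_tens mxE scale1r.
Qed.

Lemma runitM_Gobj_tens (X : Obj K) : is_obj X ->
  forall (u : 'rV_(Defs.dim X)) (a : 'rV_h),
  ((u *t a) *t (1%:M : 'rV_1)) *m runitM i (Gobj aH X)
  = (u *m powz (alpha X) (i + 1)) *t halpha aH (a *m P i).
Proof.
move=> uX u a; rewrite /runitM mulmxA runit_mx_tens mxE scale1r /= powz_tens //.
by rewrite tens_rV_mul /halpha mulmx_powzS.
Qed.

Lemma G_lunit_tens (X : Obj K) (u : 'rV_(Defs.dim X)) (a : 'rV_h) :
  ((1%:M : 'rV_1) *t (u *t a)) *m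
    ((G0 aH eta *t 1%:M) *m G2 (unitO K) X *m @Gmor K h aH (tens (unitO K) X) X (lunitM j X))
  = (u *m powz (alpha X) (j + 1)) *t mul eta (a *m P j).
Proof.
rewrite !mulmxA tens_rV_mul mulmx1 G0E mul1mx (@G2_tens (unitO K) X) hone_powz.
by rewrite /Gmor /lunitM tens_rV_mul mulmx1 mulmxA lunit_mx_tens mxE scale1r.
Qed.

Lemma lunitM_Gobj_tens (X : Obj K) : is_obj X ->
  forall (u : 'rV_(Defs.dim X)) (a : 'rV_h),
  ((1%:M : 'rV_1) *t (u *t a)) *m lunitM j (Gobj aH X)
  = (u *m powz (alpha X) (j + 1)) *t halpha aH (a *m P j).
Proof.
move=> uX u a; rewrite /lunitM mulmxA lunit_mx_tens mxE scale1r /= powz_tens //.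
by rewrite tens_rV_mul /halpha mulmx_powzS.
Qed.

Lemma runit_coherence_eq (X : Obj K) : is_obj X ->
  pinvmx (runitM i (Gobj aH X)) *m (1%:M *t G0 aH eta) *m G2 X (unitO K)
    *m @Gmor K h aH (tens X (unitO K)) X (runitM i X) = 1%:M
  <-> (1%:M *t G0 aH eta) *m G2 X (unitO K)
        *m @Gmor K h aH (tens X (unitO K)) X (runitM i X) = runitM i (Gobj aH X).
Proof.
move=> uX; rewrite -!(mulmxA (pinvmx _)).
exact: pinvmx_mul_eq1 (muln1 _) (runitM_full i (Gobj_obj uX)).
Qed.

Lemma hom_runit_iff :
  (forall X : Obj K, is_obj X ->
     pinvmx (runitM i (Gobj aH X)) *m (1%:M *t G0 aH eta) *m G2 X (unitO K)
       *m @Gmor K h aH (tens X (unitO K)) X (runitM i X) = 1%:M)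
  <-> (forall a, mul a (hone eta) = halpha aH a).
Proof.
split=> [coh a | unitr X uX]; last first.
  apply/(runit_coherence_eq uX); apply: tens2r_ext => u a.
  by rewrite (G_runit_tens (X := X)) runitM_Gobj_tens // unitr.
have/(runit_coherence_eq unitO_obj) := coh _ unitO_obj.
move/(congr1 (mulmx (((1%:M : 'rV_1) *t (a *m P (- i))) *t (1%:M : 'rV_1)))).
rewrite (G_runit_tens (X := unitO K)) (runitM_Gobj_tens unitO_obj) mulmx_powzNK //.
by move/tens_rV_inj; apply; rewrite /= powz1mx mulmx1 one_rV1_neq0.
Qed.

Lemma lunit_coherence_eq (X : Obj K) : is_obj X ->
  pinvmx (lunitM j (Gobj aH X)) *m (G0 aH eta *t 1%:M) *m G2 (unitO K) X
    *m @Gmor K h aH (tens (unitO K) X) X (lunitM j X) = 1%:M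
  <-> (G0 aH eta *t 1%:M) *m G2 (unitO K) X
        *m @Gmor K h aH (tens (unitO K) X) X (lunitM j X) = lunitM j (Gobj aH X).
Proof.
move=> uX; rewrite -!(mulmxA (pinvmx _)).
exact: pinvmx_mul_eq1 (mul1n _) (lunitM_full j (Gobj_obj uX)).
Qed.

Lemma hom_lunit_iff :
  (forall X : Obj K, is_obj X ->
     pinvmx (lunitM j (Gobj aH X)) *m (G0 aH eta *t 1%:M) *m G2 (unitO K) X
       *m @Gmor K h aH (tens (unitO K) X) X (lunitM j X) = 1%:M)
  <-> (forall a, mul (hone eta) a = halpha aH a).
Proof.
split=> [coh a | unitl X uX]; last first.
  apply/(lunit_coherence_eq uX); apply: tens2l_ext => u a.
  by rewrite (G_lunit_tens (X := X)) lunitM_Gobj_tens // unitl.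
have/(lunit_coherence_eq unitO_obj) := coh _ unitO_obj.
move/(congr1 (mulmx ((1%:M : 'rV_1) *t ((1%:M : 'rV_1) *t (a *m P (- j)))))).
rewrite (G_lunit_tens (X := unitO K)) (lunitM_Gobj_tens unitO_obj) mulmx_powzNK //.
by move/tens_rV_inj; apply; rewrite /= powz1mx mulmx1 one_rV1_neq0.
Qed.

Lemma hom_unit_iff :
  (forall X : Obj K, is_obj X ->
     pinvmx (runitM i (Gobj aH X)) *m (1%:M *t G0 aH eta) *m G2 X (unitO K)
       *m @Gmor K h aH (tens X (unitO K)) X (runitM i X) = 1%:M
     /\ pinvmx (lunitM j (Gobj aH X)) *m (G0 aH eta *t 1%:M) *m G2 (unitO K) X
       *m @Gmor K h aH (tens (unitO K) X) X (lunitM j X) = 1%:M)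
  <-> (forall a, mul (hone eta) a = halpha aH a /\ mul a (hone eta) = halpha aH a).
Proof.
split=> [coh a | unit X uX]; split.
- by move: a; apply/hom_lunit_iff => X uX; case: (coh X uX).
- by move: a; apply/hom_runit_iff => X uX; case: (coh X uX).
- by move: X uX; apply/hom_runit_iff => a; case: (unit a).
- by move: X uX; apply/hom_lunit_iff => a; case: (unit a).
Qed.

Lemma halpha_hone : halpha aH (hone eta) = hone eta.
Proof. by rewrite /halpha /hone -etam mul1mx. Qed.

End TensorHFunctor.

Theorem lemma4p2 (K : fieldType) (charK0 : [pchar K] =i pred0) (i j : int)
    (h : nat) (aH : 'M[K]_h) (mH : 'M[K]_(h * h, h)) (eta : 'M[K]_(1, h)) :
  is_obj (HO aH) ->
  @is_mor K (tens (HO aH) (HO aH)) (HO aH) mH ->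
  @is_mor K (unitO K) (HO aH) eta ->
  (is_monoidal_functor i j aH mH eta <-> is_hom_algebra aH mH eta).
Proof.
move=> uaH mHm etam; split.
  case=> _ _ _ /(hom_assoc_iff i j uaH mHm) assoc /(hom_unit_iff i j mH uaH etam) unit.
  by split=> //; apply: halpha_hone.
case=> /(hom_assoc_iff i j uaH mHm) assoc _ /(hom_unit_iff i j mH uaH etam) unit.
split=> // [X X' Y Y' F F' _ _ _ _ _ _ | X Y _ _ |].
- exact: G2_natural.
- exact: G2_is_mor.
- exact: G0_is_mor.
Qed.
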